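(* Let $\lambda,\mu\in\mathbb{C}^*$, $\alpha,\beta\in\mathbb{C}$ and $t,t'\in\{1,-1\}$, and let $\mathcal{M}_t(\lambda,\alpha)$ denote the $\mathcal{T}$-modules described in the context. Then: (i) $\Pi(\mathcal{M}_t(\lambda,\alpha))\not\cong\mathcal{M}_{t'}(\mu',\beta')$ for any $\mu'\in\mathbb{C}^*$, $\beta'\in\mathbb{C}$; (ii) $\mathcal{M}_t(\lambda,\alpha)\cong\mathcal{M}_{t'}(\mu,\beta)$ if and only if $\lambda=\mu$, $\alpha=\beta$ and $t=t'$.
   Context: The twisted $N=2$ superconformal algebra $\mathcal{T}$ is the Lie superalgebra over $\mathbb{C}$ with basis $\{L_m, I_r, G_p\mid m\in\mathbb{Z}, r\in\frac12+\mathbb{Z}, p\in\frac12\mathbb{Z}\}$, even part spanned by the $L_m,I_r$, odd part spanned by the $G_p$, and with the only nonzero brackets $[L_m,L_n]=(m-n)L_{m+n}$, $[L_m,I_r]=-rI_{m+r}$, $[L_m,G_p]=(\frac m2-p)G_{m+p}$, $[I_r,G_p]=G_{r+p}$, and $[G_p,G_q]=(-1)^{2p}2L_{p+q}$ if $p+q\in\mathbb{Z}$, $[G_p,G_q]=(-1)^{2p+1}(p-q)I_{p+q}$ if $p+q\in\frac12+\mathbb{Z}$. Modules are $\mathbb{Z}_2$-graded (super)modules and isomorphisms preserve parity; $\Pi$ is the parity-change functor. For $\lambda\in\mathbb{C}^*,\alpha\in\mathbb{C},t=\pm1$, $\mathcal{M}_t(\lambda,\alpha)$ is the space $\mathbb{C}[\partial^2]\oplus\partial\mathbb{C}[\partial^2]$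 ($\partial$ a formal variable) with even part $\mathbb{C}[\partial^2]$, odd part $\partial\mathbb{C}[\partial^2]$, and action ($m\in\mathbb{Z}$, $r\in\frac12+\mathbb{Z}$, $p\in\frac12\mathbb{Z}$): $L_mf(\partial^2)=\lambda^m(\partial^2+m\alpha)f(\partial^2+m)$, $L_m\partial f(\partial^2)=\lambda^m(\partial^2+m(\alpha+\frac12))\partial f(\partial^2+m)$, $I_rf(\partial^2)=-2t^{2r}\lambda^{r}\alpha f(\partial^2+r)$, $I_r\partial f(\partial^2)=t^{2r}\lambda^{r}(1-2\alpha)\partial f(\partial^2+r)$, $G_pf(\partial^2)=t^{2p}\lambda^p\partial f(\partial^2+p)$, $G_p\partial f(\partial^2)=(-t)^{2p}\lambda^p(\partial^2+2p\alpha)f(\partial^2+p)$. For $p\in\frac12\mathbb{Z}$, $\lambda^p$ means $(\lambda^{1/2})^{2p}$ for a fixed square root $\lambda^{1/2}$ (likewise for $\mu$). *)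

From HB Require Import structures.
From mathcomp Require Import all_boot all_order all_algebra.
From mathcomp Require Import complex.
From mathcomp Require Import reals.
Set Implicit Arguments. Unset Strict Implicit. Unset Printing Implicit Defensive.
Import Order.TTheory GRing.Theory Num.Theory.
Local Open Scope ring_scope.

(* Basis of the twisted N=2 superconformal algebra T:
   TL m   = L_m            (m : int)
   TI k   = I_r  with r = k + 1/2   (k : int)
   TG n   = G_p  with p = n / 2     (n : int)                          *)
Inductive Tbasis := TL of int | TI of int | TG of int.

(* Underlying space C[d^2] (+) d C[d^2]: a pair (f, g) stands for
   f(d^2) + d g(d^2); f is the even component, g the odd one. *)
Definition Mspace (C : fieldType) : Type := ({poly C} * {poly C})%type.

Definition shiftp (C : fieldType) (c : C) (f : {poly C}) : {poly C} :=
  f \Po ('X + c%:P).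

(* Action of the basis of T on M_t(lambda, alpha).  [s] is the fixed square
   root lambda^{1/2}, so lambda^p = s^(2p).  *)
Definition Mact (C : fieldType) (s t alpha : C) (x : Tbasis) (v : Mspace C)
  : Mspace C :=
  let f := v.1 in let g := v.2 in
  match x with
  | TL m =>
      let c := (m%:~R : C) in
      (s ^ (2 * m) *: (('X + (c * alpha)%:P) * shiftp c f),
       s ^ (2 * m) *: (('X + (c * (alpha + 2^-1))%:P) * shiftp c g))
  | TI k =>
      let r := (k%:~R + 2^-1 : C) in
      ((- 2 * t ^ (2 * k + 1) * s ^ (2 * k + 1) * alpha) *: shiftp r f,
       (t ^ (2 * k + 1) * s ^ (2 * k + 1) * (1 - 2 * alpha)) *: shiftp r g)
  | TG n =>
      let p := (n%:~R / 2 : C) in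
      (((- t) ^ n * s ^ n) *: (('X + (n%:~R * alpha)%:P) * shiftp p g),
       (t ^ n * s ^ n) *: shiftp p f)
  end.

(* A supermodule on the space Mspace C, given by an action of the basis of T
   and a parity flag: [false] means even part = C[d^2] (first component),
   [true] means parity changed (Pi), i.e. even part = d C[d^2]. *)
Definition is_even (C : fieldType) (pi : bool) (v : Mspace C) : Prop :=
  if pi then v.1 = 0 else v.2 = 0.
Definition is_odd (C : fieldType) (pi : bool) (v : Mspace C) : Prop :=
  if pi then v.2 = 0 else v.1 = 0.

Definition Mlinear (C : fieldType) (phi : Mspace C -> Mspace C) : Prop :=
  forall (a : C) (u v : Mspace C),
    phi ((a *: u.1 + v.1, a *: u.2 + v.2))
    = (a *: (phi u).1 + (phi v).1, a *: (phi u).2 + (phi v).2).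

Definition smod_iso (C : fieldType)
  (act1 : Tbasis -> Mspace C -> Mspace C) (pi1 : bool)
  (act2 : Tbasis -> Mspace C -> Mspace C) (pi2 : bool) : Prop :=
  exists phi : Mspace C -> Mspace C,
    [/\ Mlinear phi, bijective phi,
        (forall x v, phi (act1 x v) = act2 x (phi v)),
        (forall v, is_even pi1 v -> is_even pi2 (phi v)) &
        (forall v, is_odd pi1 v -> is_odd pi2 (phi v))].

From HB Require Import structures.
From mathcomp Require Import all_boot all_order all_algebra.
From mathcomp Require Import complex.
From mathcomp Require Import reals.
From mathcomp Require Import ring.
Set Implicit Arguments. Unset Strict Implicit. Unset Printing Implicit Defensive.
Import Order.TTheory GRing.Theory Num.Theory.
Local Open Scope ring_scope.

(* An isomorphism commutes with L_0, which acts as multiplication by d^2, so it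
   is C[d^2]-linear: a 2x2 matrix of polynomials.  Parity forces the matrix to
   be diagonal (antidiagonal for Pi), and bijectivity makes its entries nonzero
   constants.  Comparing the actions of L_1 on 1 and on d then gives
   lambda = mu and alpha = beta, while for Pi it gives both beta = alpha + 1/2
   and alpha = beta + 1/2, which is absurd.  Finally, with s = lambda^{1/2},
   I_{1/2} acts on 1 and on d by the scalars -2 t s alpha and t s (1 - 2 alpha),
   which are not both zero; this recovers t. *)

Section Action.
Variable C : fieldType.
Implicit Types (s t a c d : C) (f g : {poly C}).

Lemma shiftp0 f : shiftp 0 f = f.
Proof. by rewrite /shiftp addr0 comp_polyXr. Qed.

Lemma shiftpC c d : shiftp c d%:P = d%:P.
Proof. by rewrite /shiftp comp_polyC. Qed.

Lemma Mact_TL0 s t a f g : Mact s t a (TL 0) (f, g) = ('X * f, 'X * g).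
Proof. by rewrite /Mact /= !mul0r !addr0 !shiftp0 !scale1r. Qed.

Lemma Mact_TL1_const s t a c d :
  Mact s t a (TL 1) (c%:P, d%:P) =
  ((c * s ^+ 2) *: ('X + a%:P), (d * s ^+ 2) *: ('X + (a + 2^-1)%:P)).
Proof.
rewrite /Mact /= !shiftpC.
have -> : s ^ (2 * 1) = s ^+ 2 by [].
by rewrite -!mul_polyC !polyCM; congr pair; ring.
Qed.

Lemma Mact_TI0_const s t a c d :
  Mact s t a (TI 0) (c%:P, d%:P) =
  ((- 2 * t * s * a * c)%:P, (t * s * (1 - 2 * a) * d)%:P).
Proof. by rewrite /Mact /= !shiftpC !expr1z -!mul_polyC !polyCM. Qed.
End Action.

Lemma scale_X_addC_inj (C : fieldType) (k k' u u' : C) : k != 0 ->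
  k *: ('X + u%:P) = k' *: ('X + u'%:P) -> k = k' /\ u = u'.
Proof.
move=> k0 E.
have coef i : (k *: ('X + u%:P))`_i = (k' *: ('X + u'%:P))`_i by rewrite E.
have kk' : k = k'.
  by move: (coef 1%N); rewrite !coefZ !coefD !coefX !coefC !addr0 !mulr1.
split=> //; apply: (mulfI k0); move: (coef 0%N).
by rewrite !coefZ !coefD !coefX !coefC !add0r kk'.
Qed.

Lemma mul_eq1_polyC (C : fieldType) (f p : {poly C}) :
  f * p = 1 -> exists2 c, p = c%:P & c != 0.
Proof.
move=> fp1; have : p \is a GRing.unit by apply/unitrPr; exists f; rewrite mulrC.
by rewrite poly_unitE => /andP[/size_poly1P[c c0 ->] _]; exists c.
Qed.

Lemma Mlinear0 (C : fieldType) (phi : Mspace C -> Mspace C) :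
  Mlinear phi -> phi (0, 0) = (0, 0).
Proof.
move=> lin; have := lin (-1) (0, 0) (0, 0).
by rewrite /= scaler0 addr0 !scaleN1r !addNr.
Qed.

Section Intertwiner.
Variables (C : fieldType) (s t a s' t' b : C) (phi : Mspace C -> Mspace C).
Hypotheses (phi_lin : Mlinear phi)
  (phi_comm : forall x v, phi (Mact s t a x v) = Mact s' t' b x (phi v)).

Lemma intertwiner_polyM p f g :
  phi (p * f, p * g) = (p * (phi (f, g)).1, p * (phi (f, g)).2).
Proof.
elim/poly_ind: p => [|p c IH]; first by rewrite !mul0r Mlinear0.
have split_p h : (p * 'X + c%:P) * h = c *: h + 'X * (p * h).
  by rewrite -mul_polyC mulrDl addrC mulrA (mulrC p 'X).
rewrite !split_p; have /= -> := phi_lin c (f, g) ('X * (p * f), 'X * (p * g)).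
rewrite -(Mact_TL0 s t a) phi_comm IH.
by case: (phi (f, g)) => x y; rewrite Mact_TL0.
Qed.

Lemma intertwiner_matrix f g :
  phi (f, g) = (f * (phi (1, 0)).1 + g * (phi (0, 1)).1,
                f * (phi (1, 0)).2 + g * (phi (0, 1)).2).
Proof.
have := phi_lin 1 (f * 1, f * 0) (g * 0, g * 1).
by rewrite !intertwiner_polyM /= !mulr1 !mulr0 !scale1r addr0 add0r.
Qed.

Hypothesis phi_bij : bijective phi.

Lemma intertwiner_diag :
  (phi (1, 0)).2 = 0 -> (phi (0, 1)).1 = 0 ->
  exists cA cB,
    [/\ cA != 0, cB != 0 & forall f g, phi (f, g) = (cA *: f, cB *: g)].
Proof.
move=> e12 e21; case: phi_bij => psi _ psiK.
have phiE f g : phi (f, g) = (f * (phi (1, 0)).1, g * (phi (0, 1)).2).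
  by rewrite intertwiner_matrix e12 e21 !mulr0 addr0 add0r.
have := psiK (1, 0); case: (psi (1, 0)) => f1 g1.
rewrite phiE => -[/mul_eq1_polyC[cA A cA0] _].
have := psiK (0, 1); case: (psi (0, 1)) => f2 g2.
rewrite phiE => -[_ /mul_eq1_polyC[cB B cB0]].
by exists cA, cB; split=> // f g; rewrite phiE A B !(mulrC _ _%:P) !mul_polyC.
Qed.

Lemma intertwiner_antidiag :
  (phi (1, 0)).1 = 0 -> (phi (0, 1)).2 = 0 ->
  exists cA cB,
    [/\ cA != 0, cB != 0 & forall f g, phi (f, g) = (cA *: g, cB *: f)].
Proof.
move=> e11 e22; case: phi_bij => psi _ psiK.
have phiE f g : phi (f, g) = (g * (phi (0, 1)).1, f * (phi (1, 0)).2).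
  by rewrite intertwiner_matrix e11 e22 !mulr0 addr0 add0r.
have := psiK (1, 0); case: (psi (1, 0)) => f1 g1.
rewrite phiE => -[/mul_eq1_polyC[cA A cA0] _].
have := psiK (0, 1); case: (psi (0, 1)) => f2 g2.
rewrite phiE => -[_ /mul_eq1_polyC[cB B cB0]].
by exists cA, cB; split=> // f g; rewrite phiE A B !(mulrC _ _%:P) !mul_polyC.
Qed.

End Intertwiner.

Section Isomorphisms.
Variables (C : fieldType) (s t a s' t' b : C).
Hypothesis s0 : s != 0.

Lemma Mact_iso_params :
  smod_iso (Mact s t a) false (Mact s' t' b) false -> s ^+ 2 = s' ^+ 2 /\ a = b.
Proof.
case=> phi [lin bij comm ev od].
have [cA [cB [cA0 _ phiE]]] :=
  intertwiner_diag lin comm bij (ev (1, 0) erefl) (od (0, 1) erefl).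
have := congr1 fst (comm (TL 1) (1%:P, 0%:P)).
rewrite !Mact_TL1_const !phiE !scale_polyC Mact_TL1_const /=.
rewrite scalerA !mul1r mulr1.
case/scale_X_addC_inj; first by rewrite mulf_neq0 ?expf_neq0.
by move/(mulfI cA0).
Qed.

Lemma Mact_iso_sign :
  smod_iso (Mact s t a) false (Mact s t' a) false -> t = t'.
Proof.
case=> phi [lin bij comm ev od].
have [cA [cB [cA0 cB0 phiE]]] :=
  intertwiner_diag lin comm bij (ev (1, 0) erefl) (od (0, 1) erefl).
have /(congr1 fst) := comm (TI 0) (1%:P, 0%:P).
have /(congr1 snd) := comm (TI 0) (0%:P, 1%:P).
rewrite !Mact_TI0_const !phiE !scale_polyC !Mact_TI0_const /=.
move=> /polyC_inj E1 /polyC_inj E0.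
have [/eqP | a_nhalf] := eqVneq (1 - 2 * a) 0.
  rewrite subr_eq0 => /eqP a_half.
  have k0 : cA * s * (2 * a) != 0 by rewrite -a_half mulr1 mulf_neq0.
  apply: (mulfI k0).
  have -> : cA * s * (2 * a) * t = - (cA * (-2 * t * s * a * 1)) by ring.
  by rewrite E0; ring.
have k0 : cB * s * (1 - 2 * a) != 0 by rewrite !mulf_neq0.
apply: (mulfI k0).
have -> : cB * s * (1 - 2 * a) * t = cB * (t * s * (1 - 2 * a) * 1) by ring.
by rewrite E1; ring.
Qed.

Lemma Mact_parity_swap_not_iso : (2 : C) != 0 ->
  ~ smod_iso (Mact s t a) true (Mact s' t' b) false.
Proof.
move=> two0 [phi [lin bij comm ev od]].
have [cA [cB [cA0 cB0 phiE]]] :=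
  intertwiner_antidiag lin comm bij (od (1, 0) erefl) (ev (0, 1) erefl).
have /(congr1 fst) := comm (TL 1) (0%:P, 1%:P).
have /(congr1 snd) := comm (TL 1) (1%:P, 0%:P).
rewrite !Mact_TL1_const !phiE !scale_polyC !Mact_TL1_const /=.
rewrite !scalerA !mul1r !mulr1.
case/scale_X_addC_inj; first by rewrite mulf_neq0 ?expf_neq0.
move=> _ a_eq; case/scale_X_addC_inj; first by rewrite mulf_neq0 ?expf_neq0.
move=> _ b_eq.
have : (2^-1 * 2 : C) = (b + 2^-1 - a) + (a + 2^-1 - b) by ring.
by rewrite -a_eq b_eq !subrr addr0 mulVf // => /eqP; rewrite oner_eq0.
Qed.

End Isomorphisms.

Lemma smod_iso_refl (C : fieldType) (act : Tbasis -> Mspace C -> Mspace C) pi :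
  smod_iso act pi act pi.
Proof. by exists id; split=> //; exists id. Qed.

Theorem theorem2p7 (R : realType) (sq : R[i] -> R[i])
  (hsq : forall z : R[i], z != 0 -> sq z ^+ 2 = z)
  (lambda mu alpha beta t t' : R[i])
  (hl : lambda != 0) (hm : mu != 0)
  (ht : t = 1 \/ t = -1) (ht' : t' = 1 \/ t' = -1) :
  (forall (mu' beta' : R[i]), mu' != 0 ->
     ~ smod_iso (Mact (sq lambda) t alpha) true
                (Mact (sq mu') t' beta') false)
  /\
  (smod_iso (Mact (sq lambda) t alpha) false (Mact (sq mu) t' beta) false
   <-> [/\ lambda = mu, alpha = beta & t = t']).
Proof.
have s0 : sq lambda != 0.
  by apply: contra_neq (hl) => s0; rewrite -(hsq _ hl) s0 expr0n.
split=> [mu' beta' _|].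
  by apply: Mact_parity_swap_not_iso; rewrite ?pnatr_eq0.
split=> [iso | [<- <- <-]]; last exact: smod_iso_refl.
have [sq_eq ab] := Mact_iso_params s0 iso.
have lm : lambda = mu by rewrite -(hsq _ hl) -(hsq _ hm) sq_eq.
subst mu beta; split=> //; exact: Mact_iso_sign s0 iso.
Qed.
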